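(* Assume the setup (S) of the context, and suppose moreover that $\mathbb{B}$ is split exact and $I=R$. Then the complex $\mathbb{A}$ is split exact.
   Context: Setup (S): $R$ is a Noetherian unique factorization domain with $1/2\in R$; $p\ge1$, $q\ge3$, $n=p+2$; $B_0=R^{q-2}$, $B_1=R^{p+q}$, $H=R^n$. On $H\oplus H^*$ let $Q(f,f')=f'(f)$ and $\beta\big((f,f'),(g,g')\big)=f'(g)+g'(f)$, which identifies $(H\oplus H^* )^*$ with $H\oplus H^*$. Let $\mathbb{B}\colon 0\to B_0^*\xrightarrow{\delta_4}B_1^*\xrightarrow{\delta_3}H\oplus H^*\xrightarrow{\delta_2}B_1\xrightarrow{\delta_1}B_0$ be a complex with $\delta_2=\delta_3^*$ and $\delta_1=\delta_4^*$ (duals taken using $\beta$). The Clifford action of $H\oplus H^*$ on $\bigwedge H$ is $(f,f')\cdot\omega=f\wedge\omega+\iota_{f'}(\omega)$, where $\iota_{f'}(e_1\wedge\cdots\wedge e_j)=\sum_i(-1)^{i-1}f'(e_i)\,e_1\wedge\cdots\widehat{e_i}\cdots\wedge e_j$. Let $s\in\bigwedge^{\mathrm{odd}}H$ be an element such that for every prime $\mathfrak p\notin\operatorname{Supp}H_0(\mathbb{B})$, the image of $s$ generates the $R_{\mathfrak p}$-module $\{\omega\in\bigwedge H_{\mathfrak p}: x\cdot\omega=0\ \forall x\in(\operatorname{im}\delta_3)_{\mathfrak p}\}$. Let $s_1\in H$ be the degree-one component of $s$, and let $u\in B_1^*$ be any element with $\delta_3(u)=(s_1,0)$. Define $\mathbb{A}\colon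 0\to B_0^*\oplus R\xrightarrow{d_3}B_1^*\xrightarrow{d_2}H^*\xrightarrow{d_1}R$ by $d_3(b,r)=\delta_4(b)+ru$; $d_2=\pi_{H^*}\circ\delta_3$ with $\pi_{H^*}$ the projection onto $H^*$; $d_1(f')=f'(s_1)$. Let $I=\operatorname{im}d_1$. *)

From HB Require Import structures.
From mathcomp Require Import all_boot all_order all_algebra.
Set Implicit Arguments. Unset Strict Implicit. Unset Printing Implicit Defensive.
Import GRing.Theory.
Local Open Scope ring_scope.

Section RingNotions.
Variable R : idomainType.

Definition is_ideal (I : R -> Prop) : Prop :=
  I 0 /\ (forall x y, I x -> I y -> I (x + y)) /\ (forall r x, I x -> I (r * x)).

Definition is_prime_ideal (P : R -> Prop) : Prop :=
  is_ideal P /\ ~ P 1 /\ (forall a b, P (a * b) -> P a \/ P b).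

Definition noetherian_ring : Prop :=
  forall I : R -> Prop, is_ideal I ->
    exists g : seq R, forall x, I x <->
      exists c : 'I_(size g) -> R, x = \sum_(i < size g) c i * g`_i.

Definition irreducible_elt (x : R) : Prop :=
  x != 0 /\ x \isn't a GRing.unit /\
  (forall a b, x = a * b -> a \is a GRing.unit \/ b \is a GRing.unit).

Definition associated (x y : R) : Prop :=
  exists v, v \is a GRing.unit /\ x = v * y.

Definition UFD : Prop :=
  (forall x : R, x != 0 -> x \isn't a GRing.unit ->
     exists s : seq R, (forall a, a \in s -> irreducible_elt a) /\
                       x = \prod_(a <- s) a) /\
  (forall s t : seq R, (forall a, a \in s -> irreducible_elt a) ->
     (forall b, b \in t -> irreducible_elt b) ->
     \prod_(a <- s) a = \prod_(b <- t) b ->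
     size s = size t /\
     exists t' : seq R, perm_eq t t' /\
       forall i, (i < size s)%N -> associated (nth 0 s i) (nth 0 t' i)).

(* v becomes 0 after localizing at the prime P *)
Definition loc_zero (P : R -> Prop) (V : lmodType R) (v : V) : Prop :=
  exists c, ~ P c /\ c *: v = 0.
End RingNotions.

(* Modules R^k are row vectors 'rV_k; a map given by a matrix M acts as
   v |-> v *m M, so the composite "f then g" is F *m G. *)

Definition dotv (R : comNzRingType) k (x y : 'rV[R]_k) : R := \sum_(i < k) x 0 i * y 0 i.

(* beta((f,f'),(g,g')) = f'(g) + g'(f) on H (+) H^*,  H = R^n *)
Definition betaHH (R : comNzRingType) n (x y : 'rV[R]_(n + n)) : R :=
  dotv (rsubmx x) (lsubmx y) + dotv (rsubmx y) (lsubmx x).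

(* 0 -> C4 -f4-> C3 -f3-> C2 -f2-> C1 -f1-> C0 -> 0 is a split exact complex
   (complex + contracting homotopy) *)
Definition split_exact4 (R : comNzRingType) (m0 m1 m2 m3 m4 : nat)
  (f4 : 'M[R]_(m4, m3)) (f3 : 'M[R]_(m3, m2)) (f2 : 'M[R]_(m2, m1))
  (f1 : 'M[R]_(m1, m0)) : Prop :=
  [/\ f4 *m f3 = 0, f3 *m f2 = 0 & f2 *m f1 = 0] /\
  exists (h0 : 'M[R]_(m0, m1)) (h1 : 'M[R]_(m1, m2)) (h2 : 'M[R]_(m2, m3))
         (h3 : 'M[R]_(m3, m4)),
    [/\ h0 *m f1 = 1%:M, f1 *m h0 + h1 *m f2 = 1%:M,
        f2 *m h1 + h2 *m f3 = 1%:M, f3 *m h2 + h3 *m f4 = 1%:M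
      & f4 *m h3 = 1%:M].

Definition split_exact3 (R : comNzRingType) (m0 m1 m2 m3 : nat)
  (f3 : 'M[R]_(m3, m2)) (f2 : 'M[R]_(m2, m1)) (f1 : 'M[R]_(m1, m0)) : Prop :=
  [/\ f3 *m f2 = 0 & f2 *m f1 = 0] /\
  exists (h0 : 'M[R]_(m0, m1)) (h1 : 'M[R]_(m1, m2)) (h2 : 'M[R]_(m2, m3)),
    [/\ h0 *m f1 = 1%:M, f1 *m h0 + h1 *m f2 = 1%:M,
        f2 *m h1 + h2 *m f3 = 1%:M & f3 *m h2 = 1%:M].

(* omega = sum_S omega(S) e_S, e_S = e_{i1} /\ ... /\ e_{ij}, i1 < ... < ij *)
Notation ext R n := {ffun {set 'I_n} -> R^o}.

Definition wedge1 (R : comNzRingType) n (f : 'rV[R]_n) (w : ext R n) : ext R n :=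
  [ffun T : {set 'I_n} => \sum_(i in T)
     (-1) ^+ #|[set j in T | (j < i)%N]| * f 0 i * w (T :\ i)].

Definition contr (R : comNzRingType) n (f' : 'rV[R]_n) (w : ext R n) : ext R n :=
  [ffun T : {set 'I_n} => \sum_(i | i \notin T)
     (-1) ^+ #|[set j in T | (j < i)%N]| * f' 0 i * w (i |: T)].

Definition cliff (R : comNzRingType) n (x : 'rV[R]_(n + n)) (w : ext R n) : ext R n :=
  wedge1 (lsubmx x) w + contr (rsubmx x) w.

Definition deg1 (R : comNzRingType) n (s : ext R n) : 'rV[R]_n :=
  \row_i s [set i].

(* P is not in Supp H_0(B) = Supp coker(d1), unfolded:
   every element of B_0 becomes 0 in (B_0 / im d1)_P *)
Definition not_in_supp_coker (R : idomainType) (P : R -> Prop) m k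
  (d1 : 'M[R]_(m, k)) : Prop :=
  forall v : 'rV[R]_k, exists t, ~ P t /\ exists x : 'rV[R]_m, t *: v = x *m d1.

(* the image of s generates the R_P-module
   { w in /\H_P : x . w = 0 for all x in (im d3)_P }  (unfolded localization) *)
Definition gen_local_annihilator (R : idomainType) (P : R -> Prop) m n
  (d3 : 'M[R]_(m, n + n)) (s : ext R n) : Prop :=
  let annP (w : ext R n) :=
    forall b : 'rV[R]_m, loc_zero P (cliff (b *m d3) w) in
  annP s /\
  forall w : ext R n, annP w ->
    exists r t, ~ P t /\ loc_zero P (t *: w - r *: s).

From HB Require Import structures.
From mathcomp Require Import all_boot all_order all_algebra ring.
Import GRing.Theory.
Local Open Scope ring_scope.
Set Implicit Arguments. Unset Strict Implicit.

(* Since B is split, d1 is onto, so the zero ideal lies outside Supp H_0(B);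
   localizing there, the hypothesis on s says that every x = (l, l') in im d3
   annihilates s.  Pick f0 with f0(s1) = 1 (this is I = R).  The degree-0 and
   degree-2 components of x.s = 0 read l'(s1) = 0 and l = l(f0) s1 + l' K, with
   K built from the degree-3 part of s.  With these two identities the
   homotopies of B restrict to contracting homotopies of A: one is obtained by
   lifting a cycle of d2 through d3, the other by lifting a cycle of d3
   (corrected by u) through d4. *)

Section Clifford.
Variables (R : comNzRingType) (n : nat).
Implicit Types (w : ext R n) (a b i : 'I_n).

Definition sgn2 a b : R := (-1) ^+ (b < a)%N.

Lemma card_lt_set2 a b : a != b ->
  #|[set j in [set a; b] | (j < a)%N]| = (b < a)%N.
Proof.
move=> ab.
rewrite (_ : [set j in _ | _] = if (b < a)%N then [set b] else set0).
  by case: ifP; rewrite ?cards1 ?cards0.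
apply/setP => j; rewrite !inE.
have [->|ja] := eqVneq j a; first by rewrite ltnn; case: ifP; rewrite ?inE // (negbTE ab).
have [->|jb] := eqVneq j b; first by case: ifP => ba; rewrite ?inE ?eqxx ?orbT ?ba.
by case: ifP; rewrite ?inE ?(negbTE jb).
Qed.

Lemma wedge1_set2 (l : 'rV[R]_n) w a b : a != b ->
  wedge1 l w [set a; b] = sgn2 a b * (l 0 a * w [set b] - l 0 b * w [set a]).
Proof.
move=> ab; have ba : b != a by rewrite eq_sym.
rewrite ffunE big_setU1 ?inE //= big_set1 setU1K ?inE // card_lt_set2 //.
rewrite setUC setU1K ?inE // card_lt_set2 // /sgn2.
case: ltngtP => [_|_|/val_inj eab] /=; [ring | ring | by rewrite eab eqxx in ab].
Qed.

Definition contr_coef w (T : {set 'I_n}) i : R :=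
  if i \notin T then (-1) ^+ #|[set j in T | (j < i)%N]| * w (i |: T) else 0.

Lemma contrE (l : 'rV[R]_n) w T : contr l w T = \sum_i l 0 i * contr_coef w T i.
Proof.
rewrite ffunE big_mkcond /=; apply: eq_bigr => i _; rewrite /contr_coef.
by case: ifP => _; rewrite ?mulr0 // mulrCA mulrA.
Qed.

Lemma cliff_set0 (x : 'rV[R]_(n + n)) w :
  cliff x w set0 = (rsubmx x *m (deg1 w)^T) 0 0.
Proof.
rewrite /cliff !ffunE big_set0 add0r big_mkcond mxE /=; apply: eq_bigr => i _.
rewrite inE setU0 !mxE /=.
rewrite (_ : [set j : 'I_n in set0 | (j < i)%N] = set0) ?cards0 ?mul1r //.
by apply/setP => j; rewrite !inE.
Qed.

Definition pair_contr_mx (f0 : 'rV[R]_n) w : 'M[R]_n :=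
  \matrix_(i, b) \sum_a f0 0 a *
    (if a != b then sgn2 a b * contr_coef w [set a; b] i else 0).

Lemma cliff_eq0_set2 (x : 'rV[R]_(n + n)) w a b : cliff x w = 0 ->
  lsubmx x 0 a * w [set b] - lsubmx x 0 b * w [set a] =
  - \sum_i rsubmx x 0 i *
      (if a != b then sgn2 a b * contr_coef w [set a; b] i else 0).
Proof.
move=> xw0; have [<-|ab] := eqVneq a b.
  by rewrite subrr big1 ?oppr0 // => i _; rewrite mulr0.
have := congr1 (fun v : ext R n => v [set a; b]) xw0.
rewrite /cliff ffunE wedge1_set2 // contrE => /(canRL (addrK _)).
rewrite ffunE sub0r => /(congr1 ( *%R (sgn2 a b))); rewrite signrMK => ->.
by rewrite /= mulrN mulr_sumr; congr (- _); apply: eq_bigr => i _; ring.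
Qed.

Lemma cliff_eq0_lsubmx (x : 'rV[R]_(n + n)) w (f0 : 'rV[R]_n) :
  cliff x w = 0 -> f0 *m (deg1 w)^T = 1%:M ->
  lsubmx x = lsubmx x *m f0^T *m deg1 w + rsubmx x *m pair_contr_mx f0 w.
Proof.
move=> xw0 f0w; apply/rowP => b.
have f0w1 : \sum_a f0 0 a * w [set a] = 1.
  move/matrixP: f0w => /(_ 0 0); rewrite !mxE eqxx mulr1n => <-.
  by apply: eq_bigr => a _; rewrite !mxE.
have E : (lsubmx x *m f0^T) 0 0 * w [set b] - lsubmx x 0 b =
         - (rsubmx x *m pair_contr_mx f0 w) 0 b.
  transitivity (\sum_a f0 0 a * (lsubmx x 0 a * w [set b] - lsubmx x 0 b * w [set a])).
    rewrite mxE mulr_suml -[X in _ - X]mulr1 -f0w1 mulr_sumr -sumrB.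
    by apply: eq_bigr => a _; rewrite !mxE; ring.
  rewrite [in RHS]mxE -sumrN.
  under [in RHS]eq_bigr do rewrite [pair_contr_mx _ _ _ _]mxE mulr_sumr -sumrN.
  rewrite exchange_big /=; apply: eq_bigr => a _.
  by rewrite cliff_eq0_set2 // mulrN mulr_sumr -sumrN; apply: eq_bigr => i _; rewrite mulrCA.
rewrite [in RHS]mxE [in X in X + _]mxE big_ord1 [deg1 _ _ _]mxE.
by rewrite -[(rsubmx x *m _) 0 b]opprK -E opprB addrC subrK.
Qed.

Lemma rsubmx_mul_deg1 m (d : 'M[R]_(m, n + n)) w :
  (forall y : 'rV_m, cliff (y *m d) w = 0) -> rsubmx d *m (deg1 w)^T = 0.
Proof.
move=> dw0; apply/row_matrixP => i; apply/rowP => j.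
by rewrite ord1 row_mul rowE mulmx_rsub -cliff_set0 dw0 ffunE !mxE.
Qed.

Lemma lsubmx_decomp m (d : 'M[R]_(m, n + n)) w (f0 : 'rV[R]_n) :
  (forall y : 'rV_m, cliff (y *m d) w = 0) -> f0 *m (deg1 w)^T = 1%:M ->
  lsubmx d = lsubmx d *m f0^T *m deg1 w + rsubmx d *m pair_contr_mx f0 w.
Proof.
move=> dw0 f0w; apply/row_matrixP => i.
rewrite !rowE mulmxDr !mulmxA mulmx_lsub mulmx_rsub.
exact: cliff_eq0_lsubmx.
Qed.

End Clifford.

Section GenericPoint.
Variable R : idomainType.

Lemma is_prime_ideal0 : is_prime_ideal (fun x : R => x = 0).
Proof.
split; first by do ![split] => // [x y -> ->|r x ->]; rewrite ?addr0 ?mulr0.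
split=> [/eqP|a b /eqP]; first by rewrite oner_eq0.
by rewrite mulf_eq0 => /orP[] /eqP; [left|right].
Qed.

Lemma not_in_supp_coker_split (P : R -> Prop) m k (d1 : 'M[R]_(m, k)) h0 :
  ~ P 1 -> h0 *m d1 = 1%:M -> not_in_supp_coker P d1.
Proof.
move=> P1 h0d1 v; exists 1; split=> //.
by exists (v *m h0); rewrite scale1r -mulmxA h0d1 mulmx1.
Qed.

Lemma ffun_scaler_eq0 (aT : finType) (c : R) (w : {ffun aT -> R^o}) :
  c != 0 -> c *: w = 0 -> w = 0.
Proof.
move=> c0 /ffunP cw0; apply/ffunP => T; move: (cw0 T); rewrite !ffunE.
by move/eqP; rewrite mulf_eq0 (negbTE c0) => /eqP.
Qed.

Lemma gen_local_annihilator0 m n (d3 : 'M[R]_(m, n + n)) (s : ext R n) :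
  gen_local_annihilator (fun x : R => x = 0) d3 s ->
  forall b : 'rV_m, cliff (b *m d3) s = 0.
Proof.
move=> [ann _] b; have [c [c0 cs0]] := ann b.
by apply: (ffun_scaler_eq0 (c := c)) => //; apply/eqP.
Qed.

End GenericPoint.

Lemma dotv_delta (R : comNzRingType) k (v : 'rV[R]_k) j :
  dotv v (delta_mx 0 j) = v 0 j.
Proof.
rewrite /dotv (bigD1 j) //= big1 => [|t tj]; first by rewrite !mxE !eqxx mulr1 addr0.
by rewrite !mxE (negbTE tj) andbF mulr0.
Qed.

Lemma betaHH_adjoint_mx (R : comNzRingType) n k
    (d2 : 'M[R]_(n + n, k)) (d3 : 'M[R]_(k, n + n)) :
  (forall y b, dotv (y *m d2) b = betaHH y (b *m d3)) ->
  forall m (Y : 'M_(m, n + n)),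
    Y *m d2 = rsubmx Y *m (lsubmx d3)^T + lsubmx Y *m (rsubmx d3)^T.
Proof.
move=> adj m Y; apply/matrixP => i j.
have := adj (row i Y) (delta_mx 0 j); rewrite dotv_delta -rowE /betaHH /dotv => E.
have -> : (Y *m d2) i j = (row i Y *m d2) 0 j by rewrite -row_mul [RHS]mxE.
rewrite E !mxE.
by congr (_ + _); apply: eq_bigr => t _; rewrite !mxE // mulrC.
Qed.

Lemma homotopy_exact (R : pzRingType) a b c k (f : 'M[R]_(a, b))
    (h : 'M[R]_(b, a)) (h' : 'M[R]_(a, c)) (g : 'M[R]_(c, a)) :
  f *m h + h' *m g = 1%:M ->
  forall Y : 'M[R]_(k, a), Y *m f = 0 -> Y *m h' *m g = Y.
Proof.
by move=> fh Y Yf; rewrite -[RHS]mulmx1 -fh mulmxDr !mulmxA Yf mul0mx add0r.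
Qed.

Section SplitExactA.
Variables (R : comNzRingType) (m4 m3 n : nat).
Variables (d4 : 'M[R]_(m4, m3)) (d3 : 'M[R]_(m3, n + n)) (d2 : 'M[R]_(n + n, m3)).
Variables (h1 : 'M[R]_(m3, n + n)) (h2 : 'M[R]_(n + n, m3)) (h3 : 'M[R]_(m3, m4)).
Hypothesis d4d3 : d4 *m d3 = 0.
Hypothesis d2h1 : d2 *m h1 + h2 *m d3 = 1%:M.
Hypothesis d3h2 : d3 *m h2 + h3 *m d4 = 1%:M.
Hypothesis d4h3 : d4 *m h3 = 1%:M.
Hypothesis d2_adj : forall k (Y : 'M[R]_(k, n + n)),
  Y *m d2 = rsubmx Y *m (lsubmx d3)^T + lsubmx Y *m (rsubmx d3)^T.
Variables (s1 f0 : 'rV[R]_n) (K : 'M[R]_n) (u : 'rV[R]_m3).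
Hypothesis f0s1 : f0 *m s1^T = 1%:M.
Hypothesis d3R_s1 : rsubmx d3 *m s1^T = 0.
Hypothesis d3L_decomp : lsubmx d3 = lsubmx d3 *m f0^T *m s1 + rsubmx d3 *m K.
Hypothesis u_d3 : u *m d3 = row_mx s1 0.

Local Notation d3L := (lsubmx d3).
Local Notation d3R := (rsubmx d3).

Lemma u_d3L : u *m d3L = s1. Proof. by rewrite mulmx_lsub u_d3 row_mxKl. Qed.
Lemma u_d3R : u *m d3R = 0. Proof. by rewrite mulmx_rsub u_d3 row_mxKr. Qed.
Lemma d4_d3L : d4 *m d3L = 0. Proof. by rewrite mulmx_lsub d4d3 linear0. Qed.
Lemma d4_d3R : d4 *m d3R = 0. Proof. by rewrite mulmx_rsub d4d3 linear0. Qed.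

Lemma exists_homotopy_d3R : exists hA1 : 'M_(n, m3), hA1 *m d3R = 1%:M - s1^T *m f0.
Proof.
set P := 1%:M - s1^T *m f0.
have Ps1 : P *m s1^T = 0 by rewrite mulmxBl mul1mx -mulmxA f0s1 mulmx1 subrr.
set Y := row_mx (- (P *m K^T)) P.
have Yd2 : Y *m d2 = 0.
  rewrite d2_adj row_mxKr row_mxKl {1}d3L_decomp raddfD /= !trmx_mul !trmxK.
  by rewrite mulmxDr !mulmxA Ps1 !mul0mx add0r mulNmx addrN.
by exists (Y *m h2); rewrite mulmx_rsub (homotopy_exact d2h1) // row_mxKr.
Qed.

Lemma exists_homotopy_col_mx (hA1 : 'M_(n, m3)) :
  hA1 *m d3R = 1%:M - s1^T *m f0 ->
  exists hA2 : 'M_(m3, m4 + 1),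
    d3R *m hA1 + hA2 *m col_mx d4 u = 1%:M /\ col_mx d4 u *m hA2 = 1%:M.
Proof.
move=> hA1d3R; set B := 1%:M - d3R *m hA1.
have Bd3R : B *m d3R = 0.
  by rewrite mulmxBl mul1mx -mulmxA hA1d3R mulmxBr mulmx1 mulmxA d3R_s1 mul0mx subr0 subrr.
set r := B *m d3L *m f0^T.
have Bd3L : B *m d3L = r *m s1.
  by rewrite {1}d3L_decomp mulmxDr !mulmxA Bd3R mul0mx addr0.
set Z := B - r *m u.
have Zd3 : Z *m d3 = 0.
  by rewrite mulmxBl -mulmxA u_d3 -{1}[d3]hsubmxK !mul_mx_row Bd3L Bd3R mulmx0 subrr.
have d4B : d4 *m B = d4 by rewrite mulmxBr mulmx1 mulmxA d4_d3R mul0mx subr0.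
have uB : u *m B = u by rewrite mulmxBr mulmx1 mulmxA u_d3R mul0mx subr0.
have d4r : d4 *m r = 0 by rewrite /r !mulmxA d4B d4_d3L !mul0mx.
have ur : u *m r = 1%:M.
  by rewrite /r !mulmxA uB u_d3L -[s1]trmxK -trmx_mul f0s1 tr_scalar_mx.
set X := Z *m h3.
have d4X : d4 *m X = 1%:M by rewrite /X /Z mulmxA mulmxBr d4B mulmxA d4r mul0mx subr0 d4h3.
have uX : u *m X = 0 by rewrite /X /Z mulmxA mulmxBr uB mulmxA ur mul1mx subrr mul0mx.
exists (row_mx X r); split.
  by rewrite mul_row_col (homotopy_exact d3h2) // /Z subrK addrC /B subrK.
by rewrite mul_col_row d4X d4r uX ur -scalar_mx_block.
Qed.

Theorem split_exact3_A : split_exact3 (col_mx d4 u) d3R s1^T.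
Proof.
have [hA1 hA1d3R] := exists_homotopy_d3R.
have [hA2 [d3RhA1 col_hA2]] := exists_homotopy_col_mx hA1d3R.
split; first by split=> //; rewrite mul_col_mx d4_d3R u_d3R col_mx0.
by exists f0, hA1, hA2; split=> //; rewrite hA1d3R addrC subrK.
Qed.

End SplitExactA.

Theorem mainTheorem10
  (R : idomainType)
  (HnoethR : noetherian_ring R) (HufdR : UFD R)
  (Hhalf : (2%:R : R) \is a GRing.unit)
  (p q n : nat) (hp : (1 <= p)%N) (hq : (3 <= q)%N) (hn : n = (p + 2)%N)
  (d4 : 'M[R]_(q - 2, p + q)) (d3 : 'M[R]_(p + q, n + n))
  (d2 : 'M[R]_(n + n, p + q)) (d1 : 'M[R]_(p + q, q - 2))
  (Hcx : [/\ d4 *m d3 = 0, d3 *m d2 = 0 & d2 *m d1 = 0])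
  (Hd2 : forall (y : 'rV[R]_(n + n)) (b : 'rV[R]_(p + q)),
           dotv (y *m d2) b = betaHH y (b *m d3))
  (Hd1 : forall (x : 'rV[R]_(p + q)) (c : 'rV[R]_(q - 2)),
           dotv (x *m d1) c = dotv x (c *m d4))
  (s : ext R n)
  (Hsodd : forall S : {set 'I_n}, ~~ odd #|S| -> s S = 0)
  (Hs : forall P : R -> Prop, is_prime_ideal P ->
          not_in_supp_coker P d1 -> gen_local_annihilator P d3 s)
  (u : 'rV[R]_(p + q)) (Hu : u *m d3 = row_mx (deg1 s) 0)
  (HB : split_exact4 d4 d3 d2 d1)
  (HI : forall r : R, exists f' : 'rV[R]_n, (f' *m (deg1 s)^T) 0 0 = r) :
  split_exact3 (col_mx d4 u : 'M[R]_(q - 2 + 1, p + q))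
               (rsubmx d3 : 'M[R]_(p + q, n))
               ((deg1 s)^T : 'M[R]_(n, 1)).
Proof.
case: HB => [[d4d3 _ _] [h0 [h1 [h2 [h3 [h0d1 _ d2h1 d3h2 d4h3]]]]]].
have cliff_s : forall b : 'rV_(p + q), cliff (b *m d3) s = 0.
  apply/gen_local_annihilator0/Hs; first exact: is_prime_ideal0.
  by apply: (not_in_supp_coker_split _ h0d1) => /eqP; rewrite oner_eq0.
have [f0 f0s1_00] := HI 1.
have f0s1 : f0 *m (deg1 s)^T = 1%:M by rewrite [LHS]mx11_scalar f0s1_00.
exact: (split_exact3_A d4d3 d2h1 d3h2 d4h3 (betaHH_adjoint_mx Hd2) f0s1
          (rsubmx_mul_deg1 cliff_s) (lsubmx_decomp cliff_s f0s1) Hu).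
Qed.
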